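(* If $\delta:\mathrm{Pol}(S^1)\oplus\mathrm{Pol}(S^1)\to C(S^1)\oplus C(S^1)$ is any derivation, then there exist functions $f,g\in C(S^1)$ such that $$\delta=\delta_{f,g}:=\Big(f(x)\frac{1}{i}\frac{d}{dx},\ g(x)\frac{1}{i}\frac{d}{dx}\Big).$$
   Context: $\mathrm{Pol}(S^1)$ is the algebra of trigonometric polynomials in $x$ (polynomials in $e^{ix},e^{-ix}$), regarded as a subalgebra of $C(S^1)$; $\mathrm{Pol}(S^1)\oplus\mathrm{Pol}(S^1)$ is a subalgebra of $C(S^1)\oplus C(S^1)$ with componentwise operations, and a derivation is a linear map into $C(S^1)\oplus C(S^1)$ satisfying the Leibniz rule with respect to this inclusion. *)

From Stdlib Require Import Reals.
From Coquelicot Require Import Coquelicot.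
Open Scope R_scope.

Definition cis (t : R) : C := (cos t, sin t).

(* Pol(S^1): trigonometric polynomials x |-> sum_{k=-N}^{N} c_k e^{ikx},
   viewed as (2 pi-periodic) functions R -> C.  Index j = k + N in 0..2N. *)
Definition trig_pol (p : R -> C) : Prop :=
  exists (N : nat) (c : nat -> C),
    forall x : R,
      p x = sum_n (fun j => Cmult (c j) (cis ((INR j - INR N) * x))) (2 * N).

(* C(S^1): continuous complex-valued functions on the circle, viewed as
   continuous 2 pi-periodic functions R -> C. *)
Definition cont_circle (f : R -> C) : Prop :=
  (forall x : R, continuous f x) /\ (forall x : R, f (x + 2 * PI) = f x).

(* A derivation delta : Pol(S^1) (+) Pol(S^1) -> C(S^1) (+) C(S^1), given by its
   two components delta (p, q) = (d1 p q, d2 p q); its values and the required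
   identities matter only on trigonometric polynomials. *)
Definition is_derivation (d1 d2 : (R -> C) -> (R -> C) -> (R -> C)) : Prop :=
  (forall p q, trig_pol p -> trig_pol q ->
      cont_circle (d1 p q) /\ cont_circle (d2 p q)) /\
  (forall p q p' q' (a b : C), trig_pol p -> trig_pol q -> trig_pol p' -> trig_pol q' ->
      forall x,
        d1 (fun y => a * p y + b * p' y)%C (fun y => a * q y + b * q' y)%C x
          = (a * d1 p q x + b * d1 p' q' x)%C /\
        d2 (fun y => a * p y + b * p' y)%C (fun y => a * q y + b * q' y)%C x
          = (a * d2 p q x + b * d2 p' q' x)%C) /\
  (forall p1 q1 p2 q2, trig_pol p1 -> trig_pol q1 -> trig_pol p2 -> trig_pol q2 ->
      forall x,
        d1 (fun y => p1 y * p2 y)%C (fun y => q1 y * q2 y)%C x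
          = (p1 x * d1 p2 q2 x + d1 p1 q1 x * p2 x)%C /\
        d2 (fun y => p1 y * p2 y)%C (fun y => q1 y * q2 y)%C x
          = (q1 x * d2 p2 q2 x + d2 p1 q1 x * q2 x)%C).

(** Restricted to either summand, a derivation of Pol(S^1) (+) Pol(S^1) is a derivation D of
    Pol(S^1): the Leibniz rule for (0,1)(0,q) = (0,q) shows that the first component does not
    see q, and symmetrically for the second.  For e_r(x) = e^{irx}, the Leibniz rule gives
    D(1) = 0, D(e_{n+1}) = e_n D(e_1) + D(e_n) e_1 and D(e_{-n}) = -e_{-n}^2 D(e_n), hence
    D(e_n) = n e_n f with f = e_{-1} D(e_1), a continuous function on the circle.  By linearity
    D p = f (1/i) p' on every trigonometric polynomial p. *)

From Stdlib Require Import Reals Lia FunctionalExtensionality.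
From Coquelicot Require Import Coquelicot.
Open Scope R_scope.

Lemma continuous_Cmult (f g : R -> C) x :
  continuous f x -> continuous g x -> continuous (fun y => (f y * g y)%C) x.
Proof.
  assert (conv : forall h : R -> C,
    @continuous _ C_UniformSpace h x <-> @continuous _ (AbsRing_UniformSpace C_AbsRing) h x).
  { split; intros H P HP; apply H, locally_C, HP. }
  intros Hf Hg. apply conv, (@continuous_mult _ C_AbsRing); apply conv; assumption.
Qed.

Lemma cont_circle_mul (f g : R -> C) :
  cont_circle f -> cont_circle g -> cont_circle (fun x => (f x * g x)%C).
Proof.
  intros [Hfc Hfp] [Hgc Hgp]. split.
  - intro x. apply continuous_Cmult; [apply Hfc | apply Hgc].
  - intro x. rewrite Hfp, Hgp. reflexivity.
Qed.

Lemma is_derive_fst {K : AbsRing} {U V : NormedModule K}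
  (f : K -> prod_NormedModule K U V) x l :
  is_derive f x l -> is_derive (fun y => fst (f y)) x (fst l).
Proof.
  intros H. apply (filterdiff_comp f (fun t : prod_NormedModule K U V => fst t) _ (fun t => fst t) H).
  apply filterdiff_linear, is_linear_fst.
Qed.

Lemma is_derive_snd {K : AbsRing} {U V : NormedModule K}
  (f : K -> prod_NormedModule K U V) x l :
  is_derive f x l -> is_derive (fun y => snd (f y)) x (snd l).
Proof.
  intros H. apply (filterdiff_comp f (fun t : prod_NormedModule K U V => snd t) _ (fun t => snd t) H).
  apply filterdiff_linear, is_linear_snd.
Qed.

Lemma is_derive_C_unique (p : R -> C) x l l' :
  is_derive p x l -> is_derive p x l' -> l = l'.
Proof.
  intros H H'. destruct l as [a b], l' as [a' b'].
  apply is_derive_fst in H as Ha, H' as Ha'. apply is_derive_snd in H as Hb, H' as Hb'.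
  apply is_derive_unique in Ha, Ha', Hb, Hb'. simpl in *. congruence.
Qed.

Lemma is_derive_pair_C (u v : R -> R) x du dv :
  is_derive u x du -> is_derive v x dv ->
  is_derive (fun y => (u y, v y) : C) x ((du, dv) : C).
Proof.
  intros Hu Hv.
  pose proof (is_derive_plus _ _ _ _ _
    (is_derive_scal_l u x du ((1, 0) : C) Hu) (is_derive_scal_l v x dv ((0, 1) : C) Hv)) as H.
  assert (E : forall a b : R, (a * 1 + b * 0, a * 0 + b * 1) = (a, b)) by (intros; f_equal; ring).
  cbn in H. unfold prod_plus, prod_scal, plus, scal, mult in H; cbn in H. rewrite E in H.
  eapply is_derive_ext; [|exact H]. intro t. cbn. apply E.
Qed.

Definition expi (r : R) : R -> C := fun y => cis (r * y).

Lemma cis_add a b : cis (a + b) = (cis a * cis b)%C.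
Proof. unfold cis, Cmult; cbn. rewrite cos_plus, sin_plus. f_equal; ring. Qed.

Lemma expi_add r s : expi (r + s) = (fun y => expi r y * expi s y)%C.
Proof. extensionality y. unfold expi. rewrite <- cis_add. f_equal; ring. Qed.

Lemma expi_0 : expi 0 = (fun _ => RtoC 1).
Proof.
  extensionality y. unfold expi, cis. rewrite Rmult_0_l, cos_0, sin_0. reflexivity.
Qed.

Lemma expi_mul_opp r x : (expi r x * expi (- r) x)%C = RtoC 1.
Proof.
  unfold expi. rewrite <- cis_add. replace (r * x + - r * x) with (0 * x) by ring.
  change (expi 0 x = RtoC 1). rewrite expi_0. reflexivity.
Qed.

Lemma is_derive_expi_scal (c : C) r x :
  is_derive (fun y => (c * expi r y)%C) x (c * (Ci * RtoC r) * expi r x)%C.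
Proof.
  destruct c as [a b].
  replace ((a, b) * (Ci * RtoC r) * expi r x)%C with
    ((a * (- sin (r * x) * r) - b * (cos (r * x) * r),
      a * (cos (r * x) * r) + b * (- sin (r * x) * r)) : C).
  2:{ unfold expi, cis, Cmult, Ci, RtoC; cbn. f_equal; ring. }
  eapply is_derive_ext.
  2:{ apply (is_derive_pair_C (fun y => a * cos (r * y) - b * sin (r * y))
                              (fun y => a * sin (r * y) + b * cos (r * y)));
      auto_derive; auto; ring. }
  intro t. reflexivity.
Qed.

Lemma continuous_expi r x : continuous (expi r) x.
Proof.
  apply (@ex_derive_continuous R_AbsRing (prod_NormedModule R_AbsRing R_NormedModule R_NormedModule)).
  exists (1 * (Ci * RtoC r) * expi r x)%C.
  eapply is_derive_ext; [|apply is_derive_expi_scal]. intro t. apply Cmult_1_l.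
Qed.

Lemma cont_circle_expi_m1 : cont_circle (expi (-1)).
Proof.
  split; [apply continuous_expi|]. intro x. unfold expi.
  replace (-1 * (x + 2 * PI)) with (-1 * x + - (2 * PI)) by ring.
  rewrite cis_add. unfold cis at 2. rewrite cos_neg, sin_neg, cos_2PI, sin_2PI, Ropp_0.
  apply Cmult_1_r.
Qed.

Lemma sum_n_indicator {G : AbelianMonoid} (b : G) i n :
  sum_n (fun j => if Nat.eqb j i then b else zero) n = if Nat.leb i n then b else zero.
Proof.
  induction n as [|n IH].
  - rewrite sum_O. destruct (Nat.eqb_spec 0 i), (Nat.leb_spec i 0); subst; first [reflexivity | exfalso; lia].
  - rewrite sum_Sn, IH.
    destruct (Nat.eqb_spec (S n) i), (Nat.leb_spec i n), (Nat.leb_spec i (S n)); subst;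
      try (exfalso; lia); first [apply plus_zero_r | apply plus_zero_l].
Qed.

Lemma sum_n_truncate {G : AbelianMonoid} (g : nat -> G) n m : (n <= m)%nat ->
  sum_n (fun j => if Nat.leb j n then g j else zero) m = sum_n g n.
Proof.
  induction 1 as [|m Hnm IH].
  - apply sum_n_ext_loc. intros j Hj. destruct (Nat.leb_spec j n); [reflexivity | exfalso; lia].
  - rewrite sum_Sn, IH. destruct (Nat.leb_spec (S m) n); [exfalso; lia | apply plus_zero_r].
Qed.

Lemma sum_n_Sn_C (a : nat -> C) n : sum_n a (S n) = (sum_n a n + a (S n))%C.
Proof. exact (sum_Sn a n). Qed.

Lemma trig_pol_ext (p q : R -> C) : (forall x, p x = q x) -> trig_pol p -> trig_pol q.
Proof. intros Hpq [N [c Hp]]. exists N, c. intro x. rewrite <- Hpq. apply Hp. Qed.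

Lemma trig_pol_partial_sum N c n : (n <= 2 * N)%nat ->
  trig_pol (fun y => sum_n (fun j => c j * expi (INR j - INR N) y)%C n).
Proof.
  intros Hn. exists N, (fun j => if Nat.leb j n then c j else RtoC 0). intro x.
  rewrite <- (sum_n_truncate _ n (2 * N) Hn). apply sum_n_ext. intro j.
  destruct (Nat.leb j n); [reflexivity | symmetry; apply Cmult_0_l].
Qed.

Lemma trig_pol_monomial N i (a : C) : (i <= 2 * N)%nat ->
  trig_pol (fun y => a * expi (INR i - INR N) y)%C.
Proof.
  intros Hi. exists N, (fun j => if Nat.eqb j i then a else RtoC 0). intro x.
  transitivity (sum_n (fun j => if Nat.eqb j i then (a * expi (INR i - INR N) x)%C else zero) (2 * N)).
  - rewrite sum_n_indicator. destruct (Nat.leb_spec i (2 * N)); [reflexivity | exfalso; lia].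
  - apply sum_n_ext. intro j.
    destruct (Nat.eqb_spec j i); [subst; reflexivity | symmetry; apply Cmult_0_l].
Qed.

Lemma trig_pol_expi j N r : (j <= 2 * N)%nat -> r = INR j - INR N -> trig_pol (expi r).
Proof.
  intros Hj ->. apply (trig_pol_ext (fun y => 1 * expi (INR j - INR N) y)%C).
  - intro y. apply Cmult_1_l.
  - apply trig_pol_monomial, Hj.
Qed.

Lemma trig_pol_expi_nat n : trig_pol (expi (INR n)).
Proof. apply (trig_pol_expi (2 * n) n); [lia | rewrite mult_INR; simpl; ring]. Qed.

Lemma trig_pol_expi_opp_nat n : trig_pol (expi (- INR n)).
Proof. apply (trig_pol_expi 0 n); [lia | simpl; ring]. Qed.

Lemma trig_pol_expi_1 : trig_pol (expi 1).
Proof. exact (trig_pol_expi_nat 1). Qed.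

Lemma trig_pol_one : trig_pol (fun _ => RtoC 1).
Proof. rewrite <- expi_0. exact (trig_pol_expi_nat 0). Qed.

Definition zero_fun : R -> C := fun _ => RtoC 0.

Lemma trig_pol_zero : trig_pol zero_fun.
Proof.
  apply (trig_pol_ext (fun y => 0 * expi (INR 0 - INR 0) y)%C).
  - intro y. apply Cmult_0_l.
  - apply trig_pol_monomial. lia.
Qed.

Definition trig_linear (D : (R -> C) -> R -> C) : Prop :=
  forall p p' (a b : C), trig_pol p -> trig_pol p' ->
    forall x, D (fun y => a * p y + b * p' y)%C x = (a * D p x + b * D p' x)%C.

Definition trig_leibniz (D : (R -> C) -> R -> C) : Prop :=
  forall p q, trig_pol p -> trig_pol q ->
    forall x, D (fun y => p y * q y)%C x = (p x * D q x + D p x * q x)%C.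

Definition derivation_coef (D : (R -> C) -> R -> C) (x : R) : C :=
  (D (expi 1) x * expi (-1) x)%C.

Section TrigDerivation.

Variable D : (R -> C) -> R -> C.
Hypothesis D_linear : trig_linear D.
Hypothesis D_leibniz : trig_leibniz D.

Lemma D_scale p (a : C) x : trig_pol p -> D (fun y => a * p y)%C x = (a * D p x)%C.
Proof.
  intros Hp. pose proof (D_linear p p a (RtoC 0) Hp Hp x) as H.
  replace (fun y => a * p y + RtoC 0 * p y)%C with (fun y => a * p y)%C in H
    by (extensionality y; ring).
  rewrite H. ring.
Qed.

Lemma D_add p p' x : trig_pol p -> trig_pol p' ->
  D (fun y => p y + p' y)%C x = (D p x + D p' x)%C.
Proof.
  intros Hp Hp'. pose proof (D_linear p p' (RtoC 1) (RtoC 1) Hp Hp' x) as H.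
  replace (fun y => RtoC 1 * p y + RtoC 1 * p' y)%C with (fun y => p y + p' y)%C in H
    by (extensionality y; ring).
  rewrite H. ring.
Qed.

Lemma D_one x : D (fun _ => RtoC 1) x = RtoC 0.
Proof.
  pose proof (D_leibniz _ _ trig_pol_one trig_pol_one x) as H. cbv beta in H.
  replace (fun _ => RtoC 1 * RtoC 1)%C with (fun _ : R => RtoC 1) in H
    by (extensionality y; ring).
  transitivity (RtoC 1 * D (fun _ => RtoC 1) x + D (fun _ => RtoC 1) x * RtoC 1
                - D (fun _ => RtoC 1) x)%C; [ring | rewrite <- H; ring].
Qed.

(* Leibniz applied to e_r e_{-r} = 1, multiplied by e_{-r}. *)
Lemma D_expi_opp r x : trig_pol (expi r) -> trig_pol (expi (- r)) ->
  D (expi (- r)) x = (- (expi (- r) x * expi (- r) x * D (expi r) x))%C.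
Proof.
  intros Hr Hr'. pose proof (D_leibniz _ _ Hr Hr' x) as H. cbv beta in H.
  replace (fun y => expi r y * expi (- r) y)%C with (fun _ : R => RtoC 1) in H
    by (extensionality y; symmetry; apply expi_mul_opp).
  rewrite D_one in H.
  transitivity (expi r x * expi (- r) x * D (expi (- r)) x)%C;
    [rewrite expi_mul_opp; ring |].
  transitivity (expi (- r) x * (expi r x * D (expi (- r)) x + D (expi r) x * expi (- r) x)
                - expi (- r) x * expi (- r) x * D (expi r) x)%C; [ring |].
  rewrite <- H. ring.
Qed.

Lemma D_expi_1 x : D (expi 1) x = (expi 1 x * derivation_coef D x)%C.
Proof.
  unfold derivation_coef.
  transitivity (D (expi 1) x * (expi 1 x * expi (-1) x))%C; [rewrite expi_mul_opp | ]; ring.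
Qed.

Lemma D_expi_nat n x :
  D (expi (INR n)) x = (RtoC (INR n) * expi (INR n) x * derivation_coef D x)%C.
Proof.
  induction n as [|n IH].
  - rewrite INR_0, expi_0, D_one. ring.
  - rewrite S_INR, expi_add, D_leibniz, IH, D_expi_1
      by (apply trig_pol_expi_nat || apply trig_pol_expi_1).
    rewrite RtoC_plus. ring.
Qed.

Lemma D_expi_opp_nat n x :
  D (expi (- INR n)) x = (RtoC (- INR n) * expi (- INR n) x * derivation_coef D x)%C.
Proof.
  rewrite D_expi_opp, D_expi_nat by (apply trig_pol_expi_nat || apply trig_pol_expi_opp_nat).
  transitivity (- (RtoC (INR n) * expi (- INR n) x * derivation_coef D x
                   * (expi (INR n) x * expi (- INR n) x)))%C; [ring |].
  rewrite expi_mul_opp, RtoC_opp. ring.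
Qed.

Lemma D_expi_int j N x :
  D (expi (INR j - INR N)) x
  = (RtoC (INR j - INR N) * expi (INR j - INR N) x * derivation_coef D x)%C.
Proof.
  destruct (Nat.le_gt_cases N j).
  - replace (INR j - INR N) with (INR (j - N)) by (rewrite minus_INR; [ring | lia]).
    apply D_expi_nat.
  - replace (INR j - INR N) with (- INR (N - j)) by (rewrite minus_INR; [ring | lia]).
    apply D_expi_opp_nat.
Qed.

Lemma D_monomial N j (a : C) x : (j <= 2 * N)%nat ->
  D (fun y => a * expi (INR j - INR N) y)%C x
  = (derivation_coef D x * / Ci * (a * (Ci * RtoC (INR j - INR N)) * expi (INR j - INR N) x))%C.
Proof.
  intros Hj. rewrite D_scale by (apply (trig_pol_expi j N); auto).
  rewrite D_expi_int. field. apply Ci_nz.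
Qed.

Lemma D_partial_sum N c n x : (n <= 2 * N)%nat ->
  D (fun y => sum_n (fun j => c j * expi (INR j - INR N) y)%C n) x
  = (derivation_coef D x * / Ci
     * sum_n (fun j => c j * (Ci * RtoC (INR j - INR N)) * expi (INR j - INR N) x)%C n)%C.
Proof.
  induction n as [|n IH]; intros Hn.
  - replace (fun y => sum_n (fun j => c j * expi (INR j - INR N) y)%C 0)
      with (fun y => c 0%nat * expi (INR 0 - INR N) y)%C by (extensionality y; symmetry; apply sum_O).
    rewrite sum_O. apply D_monomial. lia.
  - replace (fun y => sum_n (fun j => c j * expi (INR j - INR N) y)%C (S n))
      with (fun y => sum_n (fun j => c j * expi (INR j - INR N) y)%C n
                     + c (S n) * expi (INR (S n) - INR N) y)%C
      by (extensionality y; symmetry; apply sum_n_Sn_C).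
    rewrite D_add, IH, D_monomial, sum_n_Sn_C by
      first [lia | apply trig_pol_partial_sum; lia | apply trig_pol_monomial; lia].
    ring.
Qed.

Lemma D_trig_pol p x dp : trig_pol p -> is_derive p x dp ->
  D p x = (derivation_coef D x * / Ci * dp)%C.
Proof.
  intros [N [c Hp]] Hdp.
  replace p with (fun y => sum_n (fun j => c j * expi (INR j - INR N) y)%C (2 * N))
    in * by (extensionality y; symmetry; apply Hp).
  rewrite (is_derive_C_unique _ _ _ _ Hdp (is_derive_sum_n _ _ _ _
             (fun k _ => is_derive_expi_scal (c k) (INR k - INR N) x))).
  apply D_partial_sum. lia.
Qed.

End TrigDerivation.

Lemma is_derivation_swap d1 d2 :
  is_derivation d1 d2 -> is_derivation (fun p q => d2 q p) (fun p q => d1 q p).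
Proof.
  intros [Hcont [Hlin Hleib]]. split; [|split].
  - intros p q Hp Hq. destruct (Hcont q p Hq Hp). split; assumption.
  - intros p q p' q' a b Hp Hq Hp' Hq' x.
    destruct (Hlin q p q' p' a b Hq Hp Hq' Hp' x). split; assumption.
  - intros p1 q1 p2 q2 H1 H2 H3 H4 x.
    destruct (Hleib q1 p1 q2 p2 H2 H1 H4 H3 x). split; assumption.
Qed.

Section FirstComponent.

Variables d1 d2 : (R -> C) -> (R -> C) -> (R -> C).
Hypothesis d_derivation : is_derivation d1 d2.

Lemma derivation_fst_indep p q x : trig_pol p -> trig_pol q -> d1 p q x = d1 p zero_fun x.
Proof.
  destruct d_derivation as [_ [Hlin Hleib]]. intros Hp Hq.
  assert (Hzero : d1 zero_fun q x = RtoC 0).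
  { destruct (Hleib zero_fun (fun _ => RtoC 1) zero_fun q
                trig_pol_zero trig_pol_one trig_pol_zero Hq x) as [H _].
    replace (fun y => zero_fun y * zero_fun y)%C with zero_fun in H
      by (extensionality y; unfold zero_fun; ring).
    replace (fun y => RtoC 1 * q y)%C with q in H by (extensionality y; ring).
    rewrite H. unfold zero_fun. ring. }
  destruct (Hlin p zero_fun zero_fun q (RtoC 1) (RtoC 1) Hp trig_pol_zero trig_pol_zero Hq x)
    as [H _].
  replace (fun y => RtoC 1 * p y + RtoC 1 * zero_fun y)%C with p in H
    by (extensionality y; unfold zero_fun; ring).
  replace (fun y => RtoC 1 * zero_fun y + RtoC 1 * q y)%C with q in H
    by (extensionality y; unfold zero_fun; ring).
  rewrite H, Hzero. ring.
Qed.

Lemma derivation_fst_linear : trig_linear (fun p => d1 p zero_fun).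
Proof.
  destruct d_derivation as [_ [Hlin _]]. intros p p' a b Hp Hp' x.
  destruct (Hlin p zero_fun p' zero_fun a b Hp trig_pol_zero Hp' trig_pol_zero x) as [H _].
  rewrite <- H. f_equal. extensionality y. unfold zero_fun. ring.
Qed.

Lemma derivation_fst_leibniz : trig_leibniz (fun p => d1 p zero_fun).
Proof.
  destruct d_derivation as [_ [_ Hleib]]. intros p q Hp Hq x.
  destruct (Hleib p zero_fun q zero_fun Hp trig_pol_zero Hq trig_pol_zero x) as [H _].
  rewrite <- H. f_equal. extensionality y. unfold zero_fun. ring.
Qed.

Lemma derivation_fst_repr :
  exists f : R -> C, cont_circle f /\
    forall p q, trig_pol p -> trig_pol q -> forall x dp, is_derive p x dp ->
      d1 p q x = (f x * / Ci * dp)%C.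
Proof.
  exists (derivation_coef (fun p => d1 p zero_fun)). split.
  - apply cont_circle_mul; [|exact cont_circle_expi_m1].
    exact (proj1 (proj1 d_derivation _ _ trig_pol_expi_1 trig_pol_zero)).
  - intros p q Hp Hq x dp Hdp. rewrite derivation_fst_indep by assumption.
    exact (D_trig_pol _ derivation_fst_linear derivation_fst_leibniz p x dp Hp Hdp).
Qed.

End FirstComponent.

Theorem mainTheorem13 :
  forall d1 d2 : (R -> C) -> (R -> C) -> (R -> C),
    is_derivation d1 d2 ->
    exists f g : R -> C,
      cont_circle f /\ cont_circle g /\
      forall p q : R -> C, trig_pol p -> trig_pol q ->
        forall (x : R) (dp dq : C),
          is_derive p x dp -> is_derive q x dq ->
          d1 p q x = (f x * / Ci * dp)%C /\ d2 p q x = (g x * / Ci * dq)%C.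
Proof.
  intros d1 d2 Hd.
  destruct (derivation_fst_repr d1 d2 Hd) as [f [Hf Hd1]].
  destruct (derivation_fst_repr _ _ (is_derivation_swap d1 d2 Hd)) as [g [Hg Hd2]].
  exists f, g. split; [exact Hf | split; [exact Hg |]].
  intros p q Hp Hq x dp dq Hdp Hdq. split.
  - exact (Hd1 p q Hp Hq x dp Hdp).
  - exact (Hd2 q p Hq Hp x dq Hdq).
Qed.
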